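(* Let $C\in\mathscr{C}$ and let $k_C\colon K_C\to C$ be obtained as follows: choose a distinguished triangle $S[-1]\to C\overset{a}{\to}T\to S$ with $S\in\mathcal{S},T\in\mathcal{T}$; choose a distinguished triangle $U\to T\overset{b}{\to}V[1]\to U[1]$ with $U\in\mathcal{U},V\in\mathcal{V}$; and choose a distinguished triangle $V\to K_C\overset{k_C}{\to}C\overset{b\circ a}{\to}V[1]$. Then for every $X\in\mathscr{C}^-$, the map \[ \underline{k}_C\circ-\colon\underline{\mathscr{C}}^-(X,K_C)\to\underline{\mathscr{C}}(X,C) \] is bijective.
   Context: $\mathscr{C}$ is a triangulated category with shift $[1]$; subcategories are full, additive, closed under isomorphisms and direct summands. $\mathrm{Ext}^1(X,Y)=\mathscr{C}(X,Y[1])$. $\mathcal{M}\ast\mathcal{N}$ is the full subcategory of objects $C$ admitting a distinguished triangle $M\to C\to N\to M[1]$ with $M\in\mathcal{M}$, $N\in\mathcal{N}$. A cotorsion pair $(\mathcal{U},\mathcal{V})$: $\mathrm{Ext}^1(\mathcal{U},\mathcal{V})=0$ and $\mathscr{C}=\mathcal{U}\ast\mathcal{V}[1]$. Fix a twin cotorsion pair, i.e. cotorsion pairs $(\mathcal{S},\mathcal{T}),(\mathcal{U},\mathcal{V})$ with $\mathrm{Ext}^1(\mathcal{S},\mathcal{V})=0$. Put $\mathcal{W}=\mathcal{T}\cap\mathcal{U}$, $\mathscr{C}^-=\mathcal{S}[-1]\ast\mathcal{W}$. $\underline{\mathscr{C}}$ and $\underline{\mathscr{C}}^-$ denote the ideal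 quotients of $\mathscr{C}$ and $\mathscr{C}^-$ by morphisms factoring through objects of $\mathcal{W}$, and $\underline{f}$ is the image of a morphism $f$. (One has $K_C\in\mathscr{C}^-$.) *)

From HB Require Import structures.
From mathcomp Require Import all_boot all_algebra.
Set Implicit Arguments. Unset Strict Implicit. Unset Printing Implicit Defensive.
Import GRing.Theory.
Local Open Scope ring_scope.

Record PreaddCat := {
  Ob :> Type;
  Mor : Ob -> Ob -> zmodType;
  cmp : forall X Y Z : Ob, Mor Y Z -> Mor X Y -> Mor X Z;
  idmor : forall X : Ob, Mor X X;
  cmpA : forall X Y Z W (h : Mor Z W) (g : Mor Y Z) (f : Mor X Y),
      cmp h (cmp g f) = cmp (cmp h g) f;
  cmp1f : forall X Y (f : Mor X Y), cmp (idmor Y) f = f;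
  cmpf1 : forall X Y (f : Mor X Y), cmp f (idmor X) = f;
  cmpDl : forall X Y Z (g1 g2 : Mor Y Z) (f : Mor X Y),
      cmp (g1 + g2) f = cmp g1 f + cmp g2 f;
  cmpDr : forall X Y Z (g : Mor Y Z) (f1 f2 : Mor X Y),
      cmp g (f1 + f2) = cmp g f1 + cmp g f2
}.
Arguments Mor {p}.
Arguments cmp {p X Y Z}.
Arguments idmor {p}.

Section Basic.
Variable D : PreaddCat.

Definition isIso (X Y : D) (f : Mor X Y) :=
  exists g : Mor Y X, cmp g f = idmor X /\ cmp f g = idmor Y.

Definition iso (X Y : D) := exists f : Mor X Y, isIso f.

Definition isZero (Z : D) := idmor Z = 0.

Definition isBiprod (X Y B : D) (i1 : Mor X B) (i2 : Mor Y B)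
    (p1 : Mor B X) (p2 : Mor B Y) :=
  [/\ cmp p1 i1 = idmor X, cmp p2 i2 = idmor Y, cmp p1 i2 = 0,
      cmp p2 i1 = 0 & cmp i1 p1 + cmp i2 p2 = idmor B].

Definition additive_cat :=
  (exists Z : D, isZero Z) /\
  (forall X Y : D, exists (B : D) (i1 : Mor X B) (i2 : Mor Y B)
     (p1 : Mor B X) (p2 : Mor B Y), isBiprod i1 i2 p1 p2).

(* full subcategories: predicates on objects, additive, closed under
   isomorphisms and direct summands *)
Definition subcat (P : D -> Prop) :=
  [/\ (forall X Y : D, iso X Y -> P X -> P Y),
      (forall (X Y : D) (i : Mor X Y) (p : Mor Y X),
          cmp p i = idmor X -> P Y -> P X),
      (exists Z : D, isZero Z /\ P Z) &
      (forall (X Y B : D) (i1 : Mor X B) (i2 : Mor Y B)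
          (p1 : Mor B X) (p2 : Mor B Y),
          isBiprod i1 i2 p1 p2 -> P X -> P Y -> P B)].

Definition factors_through (W : D -> Prop) (X Y : D) (f : Mor X Y) :=
  exists (Z : D) (a : Mor X Z) (b : Mor Z Y), W Z /\ f = cmp b a.

End Basic.

Record TriCat := {
  tcat :> PreaddCat;
  tcat_additive : additive_cat tcat;
  sft : tcat -> tcat;
  sftm : forall X Y : tcat, Mor X Y -> Mor (sft X) (sft Y);
  sftmD : forall X Y (f g : Mor X Y), sftm (f + g) = sftm f + sftm g;
  sftm1 : forall X : tcat, sftm (idmor X) = idmor (sft X);
  sftmM : forall X Y Z (g : Mor Y Z) (f : Mor X Y),
      sftm (cmp g f) = cmp (sftm g) (sftm f);
  sftm_inj : forall X Y (f g : Mor X Y), sftm f = sftm g -> f = g;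
  sftm_surj : forall X Y (f : Mor (sft X) (sft Y)), exists g, sftm g = f;
  sft_esurj : forall Y : tcat, exists X, iso (sft X) Y;
  distT : forall X Y Z : tcat, Mor X Y -> Mor Y Z -> Mor Z (sft X) -> Prop;
  dist_iso : forall X Y Z X' Y' Z' (f : Mor X Y) (g : Mor Y Z) (h : Mor Z (sft X))
      (f' : Mor X' Y') (g' : Mor Y' Z') (h' : Mor Z' (sft X'))
      (a : Mor X X') (b : Mor Y Y') (c : Mor Z Z'),
      isIso a -> isIso b -> isIso c ->
      cmp b f = cmp f' a -> cmp c g = cmp g' b -> cmp (sftm a) h = cmp h' c ->
      distT f g h -> distT f' g' h';
  dist_id : forall X Z : tcat, isZero Z ->
      distT (idmor X) (0 : Mor X Z) (0 : Mor Z (sft X));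
  dist_ex : forall X Y (f : Mor X Y), exists Z (g : Mor Y Z) (h : Mor Z (sft X)),
      distT f g h;
  dist_rot : forall X Y Z (f : Mor X Y) (g : Mor Y Z) (h : Mor Z (sft X)),
      distT f g h <-> distT g h (- sftm f);
  dist_morph : forall X Y Z X' Y' Z' (f : Mor X Y) (g : Mor Y Z) (h : Mor Z (sft X))
      (f' : Mor X' Y') (g' : Mor Y' Z') (h' : Mor Z' (sft X'))
      (a : Mor X X') (b : Mor Y Y'),
      distT f g h -> distT f' g' h' -> cmp b f = cmp f' a ->
      exists c : Mor Z Z', cmp c g = cmp g' b /\ cmp (sftm a) h = cmp h' c;
  dist_oct : forall X Y Z Z' X' Y' (u : Mor X Y) (v : Mor Y Z)
      (j : Mor Y Z') (k : Mor Z' (sft X))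
      (l : Mor Z X') (i : Mor X' (sft Y))
      (m : Mor Z Y') (n : Mor Y' (sft X)),
      distT u j k -> distT v l i -> distT (cmp v u) m n ->
      exists (f : Mor Z' Y') (g : Mor Y' X'),
        [/\ distT f g (cmp (sftm j) i), cmp f j = cmp m v, cmp n f = k,
            cmp g m = l & cmp (sftm u) n = cmp i g]
}.
Arguments sft {t}.
Arguments sftm {t X Y}.
Arguments distT {t X Y Z}.

Section Tri.
Variable D : TriCat.

(* Ext^1(X, Y) = Mor(X, Y[1]) *)
Definition Ext1_vanish (P Q : D -> Prop) :=
  forall (X Y : D), P X -> Q Y -> forall f : Mor X (sft Y), f = 0.

(* objects of P[1] and P[-1] *)
Definition shifted (P : D -> Prop) (X : D) := exists Y, P Y /\ iso (sft Y) X.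
Definition unshifted (P : D -> Prop) (X : D) := P (sft X).

Definition star (M N : D -> Prop) (C : D) :=
  exists (A B : D) (f : Mor A C) (g : Mor C B) (h : Mor B (sft A)),
    [/\ M A, N B & distT f g h].

Definition cotorsion_pair (U V : D -> Prop) :=
  [/\ subcat U, subcat V, Ext1_vanish U V &
      forall C : D, star U (shifted V) C].

Definition twin_cotorsion_pair (S T U V : D -> Prop) :=
  [/\ cotorsion_pair S T, cotorsion_pair U V & Ext1_vanish S V].

Definition heartW (T U : D -> Prop) (X : D) := T X /\ U X.

Definition Cminus (S T U : D -> Prop) := star (unshifted S) (heartW T U).

(* f and g have the same image in the ideal quotient by [W] *)
Definition stable_eq (W : D -> Prop) (X Y : D) (f g : Mor X Y) :=
  factors_through W (f - g).

End Tri.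

(* Since V0 -> K -> C -> V0[1] is distinguished, k is a weak kernel of b∘a.
   Write X in S[-1] * W as A -> X -> B -> A[1] with A[1] in S and B in W.
   Surjectivity: for h : X -> C, the composite a∘h vanishes on A because
   Ext^1(S, T) = 0, so it factors through B; then b∘a∘h vanishes because
   Ext^1(U, V) = 0, and h lifts along k.  Injectivity: if k∘(f - g) factors
   through Z in W, its factor out of Z lifts along k (Z lies in U); what is
   left of f - g factors through v, and that factor vanishes on A because
   Ext^1(S, V) = 0, so it factors through B.  Since W is closed under direct
   sums, f - g factors through W. *)
From HB Require Import structures.
From mathcomp Require Import all_boot all_algebra.
Set Implicit Arguments. Unset Strict Implicit. Unset Printing Implicit Defensive.
Import GRing.Theory.
Local Open Scope ring_scope.

Section Preadditive.
Variable D : PreaddCat.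
Implicit Types X Y Z : D.

Lemma cmp0r X Y Z (g : Mor Y Z) : cmp g (0 : Mor X Y) = 0.
Proof. by apply: (@addrI _ (cmp g 0)); rewrite -cmpDr !addr0. Qed.

Lemma cmp0l X Y Z (f : Mor X Y) : cmp (0 : Mor Y Z) f = 0.
Proof. by apply: (@addrI _ (cmp 0 f)); rewrite -cmpDl !addr0. Qed.

Lemma cmpNr X Y Z (g : Mor Y Z) (f : Mor X Y) : cmp g (- f) = - cmp g f.
Proof. by apply/eqP; rewrite -addr_eq0 -cmpDr addNr cmp0r. Qed.

Lemma cmpNl X Y Z (g : Mor Y Z) (f : Mor X Y) : cmp (- g) f = - cmp g f.
Proof. by apply/eqP; rewrite -addr_eq0 -cmpDl addNr cmp0l. Qed.

Lemma cmpBr X Y Z (g : Mor Y Z) (f1 f2 : Mor X Y) :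
  cmp g (f1 - f2) = cmp g f1 - cmp g f2.
Proof. by rewrite cmpDr cmpNr. Qed.

Lemma subcatI (P Q : D -> Prop) :
  subcat P -> subcat Q -> subcat (fun X => P X /\ Q X).
Proof.
case=> isoP sumP [Z [Z0 PZ]] biprodP [isoQ sumQ [Z' [_ QZ']] biprodQ].
split.
- by move=> X Y XY [PX QX]; split; [exact: isoP XY PX | exact: isoQ XY QX].
- by move=> X Y i p pi [PY QY]; split; [exact: sumP pi PY | exact: sumQ pi QY].
- exists Z; split=> //; split=> //.
  by apply: (sumQ _ _ 0 0) QZ'; rewrite Z0 cmp0r.
- move=> X Y B i1 i2 p1 p2 Hbp [PX QX] [PY QY].
  by split; [exact: biprodP Hbp PX PY | exact: biprodQ Hbp QX QY].
Qed.

Variable W : D -> Prop.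
Hypothesis subW : subcat W.

Lemma factors_through0 X Y : factors_through W (0 : Mor X Y).
Proof.
case: subW => _ _ [Z [_ WZ]] _.
by exists Z, 0, 0; rewrite cmp0r.
Qed.

Lemma factors_throughD X Y (f g : Mor X Y) : additive_cat D ->
  factors_through W f -> factors_through W g -> factors_through W (f + g).
Proof.
move=> [_ biprod] [Z1 [a1 [b1 [WZ1 ->]]]] [Z2 [a2 [b2 [WZ2 ->]]]].
have [P [i1 [i2 [p1 [p2 Hbp]]]]] := biprod Z1 Z2.
have [Hp1i1 Hp2i2 Hp1i2 Hp2i1 _] := Hbp.
case: subW => _ _ _ biprodW.
exists P, (cmp i1 a1 + cmp i2 a2), (cmp b1 p1 + cmp b2 p2).
split; first exact: biprodW Hbp WZ1 WZ2.
rewrite cmpDl !cmpDr -!cmpA !(cmpA p1) !(cmpA p2) Hp1i1 Hp2i2 Hp1i2 Hp2i1.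
by rewrite !cmp1f !cmp0l !cmp0r addr0 add0r.
Qed.

End Preadditive.

Section Triangulated.
Variable D : TriCat.

Lemma sftm0 (X Y : D) : sftm (0 : Mor X Y) = 0.
Proof. by apply: (@addrI _ (sftm 0)); rewrite -sftmD !addr0. Qed.

Lemma sft_zero (Z : D) : isZero Z -> isZero (sft Z).
Proof. by rewrite /isZero => Z0; rewrite -sftm1 Z0 sftm0. Qed.

Lemma Ext1_vanish_unshifted (P Q : D -> Prop) (A Y : D) :
  Ext1_vanish P Q -> unshifted P A -> Q Y -> forall m : Mor A Y, m = 0.
Proof. by move=> PQ PA QY m; apply: sftm_inj; rewrite sftm0; apply: PQ. Qed.

Lemma dist_lift (A B C X : D) (f : Mor A B) (g : Mor B C) (h : Mor C (sft A))
    (m : Mor X B) :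
  distT f g h -> cmp g m = 0 -> exists m' : Mor X A, m = cmp f m'.
Proof.
move=> fgh gm0; have [Z Z0] := (tcat_additive D).1.
have X0Z := (dist_rot _ _ _).1 (dist_id X Z0).
have gh_f := (dist_rot _ _ _).1 fgh.
have sq : cmp (0 : Mor Z C) (0 : Mor X Z) = cmp g m by rewrite gm0 cmp0r.
have [c [_ Hc]] := dist_morph X0Z gh_f sq.
have [c' Hc'] := sftm_surj c; rewrite -Hc' in Hc.
exists c'; apply: sftm_inj; apply: oppr_inj.
by rewrite sftmM -cmpNl -Hc sftm1 cmpNr cmpf1.
Qed.

Lemma dist_desc (A B C Y : D) (f : Mor A B) (g : Mor B C) (h : Mor C (sft A))
    (m : Mor B Y) :
  distT f g h -> cmp m f = 0 -> exists m' : Mor C Y, m = cmp m' g.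
Proof.
move=> fgh mf0; have [Z Z0] := (tcat_additive D).1.
have Y1 := dist_id Y (sft_zero Z0).
have Z_Y : distT (0 : Mor Z Y) (idmor Y) (0 : Mor Y (sft Z)).
  by apply/dist_rot; rewrite sftm0 oppr0.
have sq : cmp m f = cmp (0 : Mor Z Y) (0 : Mor A Z) by rewrite mf0 cmp0r.
have [c [Hc _]] := dist_morph fgh Z_Y sq.
by exists c; rewrite Hc cmp1f.
Qed.

End Triangulated.

Section StableLift.
Variables (D : TriCat) (S T U V : D -> Prop).
Hypotheses (subT : subcat T) (subU : subcat U).
Hypotheses (ExtST : Ext1_vanish S T) (ExtUV : Ext1_vanish U V)
  (ExtSV : Ext1_vanish S V).

Variables (C T0 V0 K : D) (a : Mor C T0) (b : Mor T0 (sft V0)).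
Variables (v : Mor V0 K) (k : Mor K C).
Hypotheses (HT0 : T T0) (HV0 : V V0) (cone_k : distT v k (cmp b a)).

Lemma subcat_heartW : subcat (heartW T U).
Proof. exact: subcatI. Qed.

Lemma stable_eq_lift_injective (X A B : D) (iA : Mor A X) (gX : Mor X B)
    (hX : Mor B (sft A)) :
  unshifted S A -> heartW T U B -> distT iA gX hX ->
  forall f g : Mor X K, stable_eq (heartW T U) (cmp k f) (cmp k g) ->
    stable_eq (heartW T U) f g.
Proof.
move=> SA WB triX f g [Z [al [be [WZ kfg]]]].
have [be' Hbe] : exists be' : Mor Z K, be = cmp k be'.
  exact: dist_lift ((dist_rot _ _ _).1 cone_k) (ExtUV WZ.2 HV0 _).
have [ga Hga] : exists ga : Mor X V0, f - g - cmp be' al = cmp v ga.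
  by apply: dist_lift cone_k _; rewrite !cmpBr kfg Hbe cmpA subrr.
have [ga' Hga'] : exists ga' : Mor B V0, ga = cmp ga' gX.
  exact: dist_desc triX (Ext1_vanish_unshifted ExtSV SA HV0 _).
rewrite /stable_eq -(subrK (cmp be' al) (f - g)) Hga Hga' cmpA addrC.
apply: (factors_throughD subcat_heartW (tcat_additive D)).
- by exists Z, al, be'.
- by exists B, gX, (cmp v ga').
Qed.

Lemma stable_eq_lift_surjective (X A B : D) (iA : Mor A X) (gX : Mor X B)
    (hX : Mor B (sft A)) :
  unshifted S A -> U B -> distT iA gX hX ->
  forall h : Mor X C, exists f : Mor X K, stable_eq (heartW T U) (cmp k f) h.
Proof.
move=> SA UB triX h.
have [phi Hphi] : exists phi : Mor B T0, cmp a h = cmp phi gX.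
  exact: dist_desc triX (Ext1_vanish_unshifted ExtST SA HT0 _).
have [f ->] : exists f : Mor X K, h = cmp k f.
  apply: dist_lift ((dist_rot _ _ _).1 cone_k) _.
  by rewrite -cmpA Hphi cmpA (ExtUV UB HV0 (cmp b phi)) cmp0l.
by exists f; rewrite /stable_eq subrr; exact: (factors_through0 subcat_heartW).
Qed.

End StableLift.

Theorem proposition3p5 (D : TriCat) (S T U V : D -> Prop)
  (Htwin : twin_cotorsion_pair S T U V)
  (C S0 T0 U0 V0 K : D)
  (s : Mor S0 C) (a : Mor C T0) (t : Mor T0 (sft S0))
  (u : Mor U0 T0) (b : Mor T0 (sft V0)) (w : Mor (sft V0) (sft U0))
  (v : Mor V0 K) (k : Mor K C)
  (HS0 : S (sft S0)) (HT0 : T T0) (Htri1 : distT s a t)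
  (HU0 : U U0) (HV0 : V V0) (Htri2 : distT u b w)
  (Htri3 : distT v k (cmp b a)) :
  forall X : D, Cminus S T U X ->
    (forall f g : Mor X K,
        stable_eq (heartW T U) (cmp k f) (cmp k g) ->
        stable_eq (heartW T U) f g) /\
    (forall h : Mor X C, exists f : Mor X K,
        stable_eq (heartW T U) (cmp k f) h).
Proof.
(* Only T0 in T and V0 in V matter. *)
case: Htwin => [[_ subT ExtST _] [subU _ ExtUV _] ExtSV].
move=> X [A [B [iA [gX [hX [SA WB triX]]]]]].
split.
- exact: (stable_eq_lift_injective subT subU ExtUV ExtSV HV0 Htri3 SA WB triX).
- exact: (stable_eq_lift_surjective subT subU ExtST ExtUV HT0 HV0 Htri3 SA WB.2 triX).
Qed.
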